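(* Let $n\ge1$. Let $(\mu_b)_{0\ne b\in\mathbb N^p,\ \mathrm{ht}(\underline b)<n}$ be a family of elements of $k$ and $(u^b)_{0\ne b\in\mathbb N^p,\ \mathrm{ht}(\underline b)<n}$ a family of elements of $k[\Gamma]$ such that for all such $b$ $$u^b=\mu_b(1-h^b)+\sum_{d,e\ne0,\ \underline d+\underline e=\underline b}t^b_{d,e}\mu_du^e,\qquad \Delta(u^b)=h^b\otimes u^b+u^b\otimes1+\sum_{d,e\ne0,\ \underline d+\underline e=\underline b}t^b_{d,e}u^dh^e\otimes u^e.$$ Let $a\in\mathbb N^p$ with $\mathrm{ht}(\underline a)=n$ and $u^a\in k[\Gamma]$. Then the following are equivalent: (i) $u^a=\mu_a(1-h^a)+\sum_{b,c\ne0,\ \underline b+\underline c=\underline a}t^a_{b,c}\mu_bu^c$ for some $\mu_a\in k$; (ii) $\Delta(u^a)=h^a\otimes u^a+u^a\otimes1+\sum_{b,c\ne0,\ \underline b+\underline c=\underline a}t^a_{b,c}u^bh^c\otimes u^c$.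
   Context: $k$ algebraically closed of characteristic $0$. $\mathcal D=\mathcal D(\Gamma,(g_i),(\chi_i),(a_{ij}))$ is a connected datum of finite Cartan type (i.e. $g_i\in\Gamma$, $\chi_i$ characters of the finite abelian group $\Gamma$, $(a_{ij})$ a connected Cartan matrix of finite type, $q_{ij}=\chi_j(g_i)$, $q_{ij}q_{ji}=q_{ii}^{a_{ij}}$, $q_{ii}\ne1$) such that each $q_{ii}$ has odd order, prime to 3 in type $G_2$; $N$ is the common order of the $q_{ii}$. $\Phi^+=\{\beta_1,\dots,\beta_p\}$ is the set of positive roots in the convex order given by a fixed reduced expression of the longest Weyl group element; for $\alpha=\sum n_i\alpha_i$, $g_\alpha=\prod g_i^{n_i}$, $\chi_\alpha=\prod\chi_i^{n_i}$, $\mathrm{ht}(\alpha)=\sum n_i$. $R(\mathcal D)$ is the tensor algebra $k\langle x_1,\dots,x_\theta\rangle$ (braided Hopf algebra in Yetter–Drinfeld modules over $\Gamma$, $x_i$ primitive of $\Gamma$-degree $g_i$ and weight $\chi_i$, braiding $c(x\otimes y)=\chi_\beta(g_\alpha)y\otimes x$ for $x,y$ of $\mathbb Z^\theta$-degrees $\alpha,\beta$) modulo the quantum Serre relations $\mathrm{ad}_c(x_i)^{1-a_{ij}}(x_j)$, $i\ne j$; $x_{\beta_l}$ are the root vectors (the iterated braided commutators corresponding to Lusztig's PBW root vectors). Put $z_l=x_{\beta_l}^N$, $h_l=g_{\beta_l}^N$, and for $a\in\mathbb N^p$: $z^a=z_1^{a_1}\cdots z_p^{a_p}$, $h^a=h_1^{a_1}\cdots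 h_p^{a_p}$, $\underline a=\sum a_l\beta_l\in\mathbb Z^\theta$. The subalgebra $K(\mathcal D)$ generated by the $z_l$ is a braided Hopf subalgebra with basis $(z^a)_{a\in\mathbb N^p}$, and $t^a_{b,c}\in k$ ($0\ne b,c$) are the unique scalars with $\Delta_{K(\mathcal D)}(z^a)=z^a\otimes1+1\otimes z^a+\sum_{b,c\ne0,\underline b+\underline c=\underline a}t^a_{b,c}z^b\otimes z^c$. $\Delta$ in the claim is the comultiplication of the group algebra $k[\Gamma]$. *)

From HB Require Import structures.
From mathcomp Require Import all_boot all_order all_algebra all_fingroup.
Set Implicit Arguments. Unset Strict Implicit. Unset Printing Implicit Defensive.
Import GRing.Theory.
Local Open Scope ring_scope.

(* ---------- The group algebra k[Gamma] and k[Gamma] (x) k[Gamma] ----------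
   An element of k[Gamma] is its coefficient function Gamma -> k
   (u = \sum_x u(x) x).  k[Gamma] (x) k[Gamma] = k[Gamma x Gamma] is represented
   by coefficient functions on pairs: w = \sum_(x,y) w(x,y) x (x) y. *)
Notation galg k gT := {ffun gT -> GRing.Nmodule.sort k} (only parsing).
Notation galg2 k gT := {ffun (gT * gT)%type -> GRing.Nmodule.sort k} (only parsing).

Definition gelem (k : nzRingType) (gT : finGroupType) (g : gT) : galg k gT :=
  [ffun x => (x == g)%:R].
Definition gmul (k : nzRingType) (gT : finGroupType) (u v : galg k gT) : galg k gT :=
  [ffun x => \sum_(y : gT) u y * v (y^-1 * x)%g].
Definition gtens (k : nzRingType) (gT : finGroupType) (u v : galg k gT) : galg2 k gT :=
  [ffun xy => u xy.1 * v xy.2].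
(* comultiplication of k[Gamma]: Delta(g) = g (x) g *)
Definition gDelta (k : nzRingType) (gT : finGroupType) (u : galg k gT) : galg2 k gT :=
  [ffun xy => if xy.1 == xy.2 then u xy.1 else 0].

Definition nvec (p : nat) := {ffun 'I_p -> nat}.
Definition nzv (p : nat) (a : nvec p) : bool := [exists l, a l != 0%N].
Definition ht (theta : nat) (al : {ffun 'I_theta -> nat}) : nat := (\sum_(i < theta) al i)%N.
Definition under (theta p : nat) (beta : 'I_p -> {ffun 'I_theta -> nat}) (a : nvec p)
  : {ffun 'I_theta -> nat} := [ffun i => (\sum_(l < p) a l * beta l i)%N].
Definition sumeq (theta : nat) (x y z : {ffun 'I_theta -> nat}) : bool :=
  [forall i, (x i + y i == z i)%N].

Definition groot (gT : finGroupType) (theta : nat) (g : 'I_theta -> gT)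
  (al : {ffun 'I_theta -> nat}) : gT := (\prod_(i < theta) g i ^+ al i)%g.
Definition hpow (gT : finGroupType) (theta p : nat) (g : 'I_theta -> gT)
  (beta : 'I_p -> {ffun 'I_theta -> nat}) (N : nat) (a : nvec p) : gT :=
  (\prod_(l < p) (groot g (beta l) ^+ N) ^+ a l)%g.

Definition natv (p m : nat) (b : {ffun 'I_p -> 'I_m}) : nvec p := [ffun l => val (b l)].

(* Since every positive root has
   height >= 1, such b, c have all entries <= ht(underline a), so the finite
   enumeration of vectors with entries in 'I_(ht(underline a)).+1 is exhaustive. *)
Definition dsum (V : nmodType) (theta p : nat) (beta : 'I_p -> {ffun 'I_theta -> nat})
  (a : nvec p) (F : nvec p -> nvec p -> V) : V :=
  \sum_(b : {ffun 'I_p -> 'I_(ht (under beta a)).+1})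
   \sum_(c : {ffun 'I_p -> 'I_(ht (under beta a)).+1}
        | [&& nzv (natv b), nzv (natv c) &
              sumeq (under beta (natv b)) (under beta (natv c)) (under beta a)])
     F (natv b) (natv c).

(* Sum over all b in N^p with underline b = x (with entries bounded by ht x,
   again exhaustive since positive roots have height >= 1). *)
Definition rsum (V : nmodType) (theta p : nat) (beta : 'I_p -> {ffun 'I_theta -> nat})
  (x : {ffun 'I_theta -> nat}) (F : nvec p -> V) : V :=
  \sum_(b : {ffun 'I_p -> 'I_(ht x).+1} | under beta (natv b) == x) F (natv b).

(* Coassociativity of Delta_K(z^a) = z^a(x)1 + 1(x)z^a + sum t^a_{b,c} z^b (x) z^c,
   read on the coefficient of z^x (x) z^y (x) z^w, x,y,w <> 0 (the coefficients
   of the other basis tensors are automatically equal). *)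
Definition t_coassoc (k : nzRingType) (theta p : nat)
  (beta : 'I_p -> {ffun 'I_theta -> nat}) (t : nvec p -> nvec p -> nvec p -> k) : Prop :=
  forall a x y w : nvec p, nzv x -> nzv y -> nzv w ->
    (forall i, (under beta x i + under beta y i + under beta w i)%N = under beta a i) ->
    rsum beta [ffun i => (under beta x i + under beta y i)%N]
         (fun b => t a b w * t b x y)
    = rsum beta [ffun i => (under beta y i + under beta w i)%N]
         (fun c => t a x c * t c y w).

Definition gscal (k : nzRingType) (gT : finGroupType) (c : k) (u : galg k gT) : galg k gT :=
  [ffun x => c * u x].
Definition gscal2 (k : nzRingType) (gT : finGroupType) (c : k) (w : galg2 k gT) : galg2 k gT :=
  [ffun x => c * w x].

From HB Require Import structures.
From mathcomp Require Import all_boot all_order all_algebra all_fingroup.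
From mathcomp Require Import ring.
Import GRing.Theory.
Local Open Scope ring_scope.
Set Implicit Arguments. Unset Strict Implicit.

(* Let W := sum_{b,c} t^a_{b,c} mu_b u^c.  Expanding Delta(u^c) and u^b by the
   hypotheses (b, c have smaller height), using h^b h^c = h^a (Gamma is abelian)
   and the coassociativity of the t's, one finds
     Delta(W) = h^a (x) W + W (x) 1 + sum_{b,c} t^a_{b,c} u^b h^c (x) u^c.
   Hence (ii) holds iff u^a - W is (h^a,1)-skew-primitive in k[Gamma], and the
   skew-primitive elements of k[Gamma] are exactly the multiples of 1 - h^a. *)

Section AbelianRoots.
Variables (gT : finGroupType) (theta p : nat) (g : 'I_theta -> gT).
Variables (beta : 'I_p -> {ffun 'I_theta -> nat}) (N : nat).
Hypothesis gT_abelian : abelian [set: gT].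

Let mulgC : commutative ( *%g : gT -> gT -> gT).
Proof. by move=> x y; apply/(centsP gT_abelian); rewrite inE. Qed.
HB.instance Definition _ := SemiGroup.isCommutativeLaw.Build gT *%g mulgC.

Lemma prodgXn (I : finType) m (F : I -> gT) : ((\prod_i F i) ^+ m = \prod_i F i ^+ m)%g.
Proof. by apply: (big_morph (fun x => x ^+ m)%g) => [x y|]; rewrite ?expgMn ?expg1n. Qed.

Lemma hpowE (a : nvec p) :
  hpow g beta N a = (\prod_(i < theta) g i ^+ (under beta a i * N))%g.
Proof.
transitivity (\prod_(l < p) \prod_(i < theta) g i ^+ (beta l i * N * a l))%g.
  apply: eq_bigr => l _; rewrite -expgnA /groot prodgXn.
  by apply: eq_bigr => i _; rewrite -expgnA mulnA.
rewrite exchange_big; apply: eq_bigr => i _.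
rewrite prodgXr ffunE big_distrl /=; congr (_ ^+ _)%g.
by apply: eq_bigr => l _; rewrite mulnC mulnA.
Qed.

Lemma hpowM (a b c : nvec p) :
  sumeq (under beta b) (under beta c) (under beta a) ->
  (hpow g beta N b * hpow g beta N c)%g = hpow g beta N a.
Proof.
move/forallP=> bca; rewrite !hpowE -big_split; apply: eq_bigr => i _ /=.
by rewrite -expgnDr -mulnDl (eqP (bca i)).
Qed.

End AbelianRoots.

Section Decompositions.
Variables (theta p : nat) (beta : 'I_p -> {ffun 'I_theta -> nat}).
Hypothesis ht_beta_gt0 : forall l, (0 < ht (beta l))%N.

Local Notation box B := {ffun 'I_p -> 'I_B.+1}.

Lemma ht_addv (x y : {ffun 'I_theta -> nat}) :
  ht [ffun i => (x i + y i)%N] = (ht x + ht y)%N.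
Proof. by rewrite /ht -big_split; apply: eq_bigr => i _; rewrite ffunE. Qed.

Lemma sumeqE (x y z : {ffun 'I_theta -> nat}) :
  sumeq x y z = (z == [ffun i => (x i + y i)%N]).
Proof.
apply/forallP/eqP => [xyz | -> i]; last by rewrite ffunE.
by apply/ffunP => i; rewrite ffunE (eqP (xyz i)).
Qed.

Lemma ht_sumeq (x y z : {ffun 'I_theta -> nat}) :
  sumeq x y z -> ht z = (ht x + ht y)%N.
Proof. by rewrite sumeqE => /eqP ->; rewrite ht_addv. Qed.

Lemma ht_under (x : nvec p) : ht (under beta x) = (\sum_(l < p) x l * ht (beta l))%N.
Proof.
rewrite /ht; under eq_bigr do rewrite ffunE.
by rewrite exchange_big; apply: eq_bigr => l _; rewrite big_distrr.
Qed.

Lemma leq_ht_under (x : nvec p) l : (x l <= ht (under beta x))%N.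
Proof.
rewrite ht_under (bigD1 l) //=.
by apply: leq_trans (leq_addr _ _); rewrite leq_pmulr.
Qed.

Lemma nzv_ht (x : nvec p) : nzv x = (0 < ht (under beta x))%N.
Proof.
rewrite ht_under lt0n sum_nat_eq0 negb_forall; apply: eq_existsb => l /=.
by rewrite muln_eq0 negb_or -(lt0n (ht _)) ht_beta_gt0 andbT.
Qed.

Definition decomp (a b c : nvec p) : bool :=
  [&& nzv b, nzv c & sumeq (under beta b) (under beta c) (under beta a)].

Definition decomp3 (a x y w : nvec p) : bool :=
  [&& nzv x, nzv y, nzv w &
      [forall i, under beta x i + under beta y i + under beta w i == under beta a i]%N].

Lemma decomp_ht (a b c : nvec p) :
  decomp a b c -> ht (under beta a) = (ht (under beta b) + ht (under beta c))%N.
Proof. by case/and3P=> _ _ /ht_sumeq. Qed.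

Lemma decomp_ltn (a b c : nvec p) : decomp a b c ->
  (ht (under beta b) < ht (under beta a))%N /\ (ht (under beta c) < ht (under beta a))%N.
Proof.
move=> abc; have /and3P[b_nz c_nz _] := abc.
rewrite (decomp_ht abc); split.
  by rewrite -[X in (X < _)%N]addn0 ltn_add2l -nzv_ht.
by rewrite -[X in (X < _)%N]add0n ltn_add2r -nzv_ht.
Qed.

Lemma decomp3_ht (a x y w : nvec p) : decomp3 a x y w ->
  ht (under beta a) = (ht (under beta x) + ht (under beta y) + ht (under beta w))%N.
Proof.
case/and4P=> _ _ _ /forallP xywa; rewrite /ht -!big_split.
by apply: eq_bigr => i _; rewrite /= (eqP (xywa i)).
Qed.

Lemma decomp_decompr (a b c d e : nvec p) :
  decomp a b c && decomp c d e
  = decomp3 a b d e && sumeq (under beta d) (under beta e) (under beta c).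
Proof.
apply/idP/idP.
  case/andP=> /and3P[b_nz _ /forallP bca] /and3P[d_nz e_nz dec].
  rewrite /decomp3 b_nz d_nz e_nz dec andbT; apply/forallP => i.
  by move/forallP/(_ i)/eqP: dec; rewrite -addnA => ->; apply: bca.
case/andP=> /and4P[b_nz d_nz e_nz /forallP bdea] dec.
have c_nz : nzv c by rewrite nzv_ht (ht_sumeq dec) addn_gt0 -nzv_ht d_nz.
rewrite /decomp b_nz c_nz d_nz e_nz dec /= andbT; apply/forallP => i.
by move/forallP/(_ i)/eqP: dec <-; rewrite addnA.
Qed.

Lemma decomp_decompl (a b c d e : nvec p) :
  decomp a b c && decomp b d e
  = decomp3 a d e c && sumeq (under beta d) (under beta e) (under beta b).
Proof.
apply/idP/idP.
  case/andP=> /and3P[_ c_nz bca] /and3P[d_nz e_nz dec].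
  rewrite /decomp3 c_nz d_nz e_nz dec andbT; apply/forallP => i.
  by move/forallP/(_ i)/eqP: dec ->; move/forallP: bca.
case/andP=> /and4P[d_nz e_nz c_nz /forallP deca] deb.
have b_nz : nzv b by rewrite nzv_ht (ht_sumeq deb) addn_gt0 -nzv_ht d_nz.
rewrite /decomp b_nz c_nz d_nz e_nz deb /= andbT; apply/forallP => i.
by move/forallP/(_ i)/eqP: deb <-.
Qed.

Lemma sum_box_widen (V : nmodType) (m B : nat) (F : nvec p -> V) :
  (m <= B)%N -> (forall v : nvec p, (exists l, m < v l)%N -> F v = 0) ->
  \sum_(b : box m) F (natv b) = \sum_(b : box B) F (natv b).
Proof.
move=> le_mB F0; have le_mB1 : (m.+1 <= B.+1)%N by [].
pose inbox (b : box B) := [forall l, (b l <= m)%N].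
rewrite [RHS](bigID inbox) /= [X in _ + X]big1 ?addr0; last first.
  move=> b /forallPn[l]; rewrite -ltnNge => lt_m.
  by apply: F0; exists l; rewrite ffunE.
pose widen (b : box m) : box B := [ffun l => widen_ord le_mB1 (b l)].
pose shrink (b : box B) : box m := [ffun l => inord (b l)].
have natv_widen b : natv (widen b) = natv b by apply/ffunP => l; rewrite !ffunE.
rewrite (reindex_onto widen shrink) /=; last first.
  move=> b /forallP inb; apply/ffunP => l; apply: val_inj.
  by rewrite !ffunE /= inordK // ltnS inb.
apply: eq_big => b; last by rewrite natv_widen.
apply/esym/andP; split.
  by apply/forallP => l; rewrite ffunE /= -ltnS ltn_ord.
by apply/eqP/ffunP => l; apply: val_inj; rewrite !ffunE /= inord_val.
Qed.

Lemma dsumE (V : nmodType) (a : nvec p) (F : nvec p -> nvec p -> V) (B : nat) :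
  (ht (under beta a) <= B)%N ->
  dsum beta a F = \sum_(d : box B) \sum_(e : box B)
    (if decomp a (natv d) (natv e) then F (natv d) (natv e) else 0).
Proof.
move=> le_aB; have outside_box d e : decomp a d e ->
    (forall l, d l <= ht (under beta a))%N /\ (forall l, e l <= ht (under beta a))%N.
  move=> /decomp_ht ->; split=> l.
    exact: leq_trans (leq_ht_under d l) (leq_addr _ _).
  exact: leq_trans (leq_ht_under e l) (leq_addl _ _).
pose G d e := if decomp a d e then F d e else 0.
transitivity (\sum_(d : box (ht (under beta a))) \sum_(e : box B) G (natv d) (natv e)).
  apply: eq_bigr => d _; rewrite big_mkcond; apply: (sum_box_widen (F := G (natv d)) le_aB).
  move=> e [l lt_e]; rewrite /G; case: ifP => // /outside_box[_ e_le].
  by rewrite ltnNge e_le in lt_e.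
apply: (sum_box_widen (F := fun d => \sum_(e : box B) G d (natv e)) le_aB).
move=> d [l lt_d]; apply: big1 => e _; rewrite /G; case: ifP => // /outside_box[d_le _].
by rewrite ltnNge d_le in lt_d.
Qed.

Lemma rsumE (V : nmodType) (x : {ffun 'I_theta -> nat}) (F : nvec p -> V) (B : nat) :
  (ht x <= B)%N ->
  rsum beta x F = \sum_(b : box B) (if under beta (natv b) == x then F (natv b) else 0).
Proof.
move=> le_xB; rewrite /rsum big_mkcond.
apply: (sum_box_widen (F := fun b => if under beta b == x then F b else 0) le_xB).
move=> b [l lt_b]; case: eqP => // xb.
by rewrite ltnNge -xb leq_ht_under in lt_b.
Qed.

Definition dsum3 (V : nmodType) (a : nvec p) (F : nvec p -> nvec p -> nvec p -> V) : V :=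
  \sum_(x : box (ht (under beta a))) \sum_(y : box (ht (under beta a)))
   \sum_(w : box (ht (under beta a)))
     (if decomp3 a (natv x) (natv y) (natv w) then F (natv x) (natv y) (natv w) else 0).

Lemma dsum_dsumr (V : nmodType) (a : nvec p)
    (F : nvec p -> nvec p -> nvec p -> nvec p -> V) :
  dsum beta a (fun x c => dsum beta c (F x c))
  = dsum3 a (fun x y w =>
      rsum beta [ffun i => (under beta y i + under beta w i)%N] (fun c => F x c y w)).
Proof.
set B := ht (under beta a); rewrite (dsumE _ (leqnn B)).
transitivity (\sum_(x : box B) \sum_(c : box B) \sum_(y : box B) \sum_(w : box B)
  (if decomp a (natv x) (natv c) && decomp (natv c) (natv y) (natv w)
   then F (natv x) (natv c) (natv y) (natv w) else 0)).
  apply: eq_bigr => x _; apply: eq_bigr => c _; case: ifP => [xc | _]; last first.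
    by rewrite big1 // => y _; rewrite big1.
  rewrite (dsumE _ (ltnW (proj2 (decomp_ltn xc)))).
  by apply: eq_bigr => y _; apply: eq_bigr => w _.
apply: eq_bigr => x _; rewrite exchange_big; apply: eq_bigr => y _.
rewrite exchange_big; apply: eq_bigr => w _; under eq_bigr do rewrite decomp_decompr.
case: ifP => [xyw | _]; last by rewrite big1.
rewrite (rsumE _ _ (B := B)); last first.
  apply: (leq_trans _ (eq_leq (esym (decomp3_ht xyw)))).
  by rewrite ht_addv -addnA leq_addl.
by apply: eq_bigr => c _; rewrite sumeqE.
Qed.

Lemma dsum_dsuml (V : nmodType) (a : nvec p)
    (F : nvec p -> nvec p -> nvec p -> nvec p -> V) :
  dsum beta a (fun b w => dsum beta b (F b w))
  = dsum3 a (fun x y w =>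
      rsum beta [ffun i => (under beta x i + under beta y i)%N] (fun b => F b w x y)).
Proof.
set B := ht (under beta a); rewrite (dsumE _ (leqnn B)).
transitivity (\sum_(b : box B) \sum_(w : box B) \sum_(x : box B) \sum_(y : box B)
  (if decomp a (natv b) (natv w) && decomp (natv b) (natv x) (natv y)
   then F (natv b) (natv w) (natv x) (natv y) else 0)).
  apply: eq_bigr => b _; apply: eq_bigr => w _; case: ifP => [bw | _]; last first.
    by rewrite big1 // => x _; rewrite big1.
  rewrite (dsumE _ (ltnW (proj1 (decomp_ltn bw)))).
  by apply: eq_bigr => x _; apply: eq_bigr => y _.
under eq_bigr do rewrite exchange_big.
under eq_bigr do under eq_bigr do rewrite exchange_big.
rewrite exchange_big; apply: eq_bigr => x _; rewrite exchange_big; apply: eq_bigr => y _.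
rewrite exchange_big; apply: eq_bigr => w _; under eq_bigr do rewrite decomp_decompl.
case: ifP => [xyw | _]; last by rewrite big1.
rewrite (rsumE _ _ (B := B)); last first.
  apply: (leq_trans _ (eq_leq (esym (decomp3_ht xyw)))).
  by rewrite ht_addv leq_addr.
by apply: eq_bigr => b _; rewrite sumeqE.
Qed.

Lemma dsum_coassoc (R : comNzRingType) (t : nvec p -> nvec p -> nvec p -> R)
    (a : nvec p) (G : nvec p -> nvec p -> nvec p -> R) :
  t_coassoc beta t ->
  dsum beta a (fun b c => dsum beta c (fun d e => t a b c * t c d e * G b d e))
  = dsum beta a (fun b c => dsum beta b (fun d e => t a b c * t b d e * G d e c)).
Proof.
(* both sides are sums over the triples a = x + y + w, whose coefficients are the
   two sides of [t_coassoc] *)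
move=> t_coass; rewrite dsum_dsumr dsum_dsuml.
apply: eq_bigr => x _; apply: eq_bigr => y _; apply: eq_bigr => w _.
case: ifP => // /and4P[x_nz y_nz w_nz /forallP xywa].
rewrite /rsum -!mulr_suml; congr (_ * _); apply/esym/t_coass => // i.
exact/eqP/xywa.
Qed.

End Decompositions.

Section DsumAlgebra.
Variables (theta p : nat) (beta : 'I_p -> {ffun 'I_theta -> nat}) (a : nvec p).

Lemma eq_dsum (V : nmodType) (F F' : nvec p -> nvec p -> V) :
  (forall b c, decomp beta a b c -> F b c = F' b c) -> dsum beta a F = dsum beta a F'.
Proof. by move=> FF'; apply: eq_bigr => b _; apply: eq_bigr => c /FF'. Qed.

Lemma dsumD (V : nmodType) (F F' : nvec p -> nvec p -> V) :
  dsum beta a (fun b c => F b c + F' b c) = dsum beta a F + dsum beta a F'.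
Proof. by rewrite /dsum -big_split; apply: eq_bigr => b _; rewrite -big_split. Qed.

Lemma dsumB (V : zmodType) (F F' : nvec p -> nvec p -> V) :
  dsum beta a (fun b c => F b c - F' b c) = dsum beta a F - dsum beta a F'.
Proof. by rewrite /dsum -sumrB; apply: eq_bigr => b _; rewrite -sumrB. Qed.

Lemma dsumMl (R : pzSemiRingType) (m : R) (F : nvec p -> nvec p -> R) :
  dsum beta a (fun b c => m * F b c) = m * dsum beta a F.
Proof. by rewrite /dsum mulr_sumr; apply: eq_bigr => b _; rewrite mulr_sumr. Qed.

Lemma dsumMr (R : pzSemiRingType) (m : R) (F : nvec p -> nvec p -> R) :
  dsum beta a (fun b c => F b c * m) = dsum beta a F * m.
Proof. by rewrite /dsum mulr_suml; apply: eq_bigr => b _; rewrite mulr_suml. Qed.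

Lemma dsum_ffunE (V : nmodType) (T : finType) (F : nvec p -> nvec p -> {ffun T -> V}) z :
  dsum beta a F z = dsum beta a (fun b c => F b c z).
Proof. by rewrite /dsum sum_ffunE; apply: eq_bigr => b _; rewrite sum_ffunE. Qed.

End DsumAlgebra.

Section GroupAlgebra.
Variables (k : comNzRingType) (gT : finGroupType).

Lemma gmul_gelemE (v : galg k gT) (h x : gT) : gmul v (gelem k h) x = v (x * h^-1)%g.
Proof.
rewrite ffunE (bigD1 (x * h^-1)%g) //= big1 ?addr0 => [|y ne_y].
  by rewrite ffunE invMg invgK mulgKV eqxx mulr1.
rewrite ffunE; case: eqP => [yx | _]; last by rewrite mulr0.
by rewrite -yx invMg invgK mulKVg eqxx in ne_y.
Qed.

Lemma gDeltaB (v w : galg k gT) : gDelta (v - w) = gDelta v - gDelta w.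
Proof. by apply/ffunP => xy; rewrite !ffunE; case: eqP; rewrite ?subr0. Qed.

Lemma gtensBl (v v' w : galg k gT) : gtens (v - v') w = gtens v w - gtens v' w.
Proof. by apply/ffunP => xy; rewrite !ffunE mulrBl. Qed.

Lemma gtensBr (v w w' : galg k gT) : gtens v (w - w') = gtens v w - gtens v w'.
Proof. by apply/ffunP => xy; rewrite !ffunE mulrBr. Qed.

Lemma skew_primitiveP (h : gT) (v : galg k gT) :
  (exists m, v = gscal m (gelem k 1%g - gelem k h))
  <-> gDelta v = gtens (gelem k h) v + gtens v (gelem k 1%g).
Proof.
split=> [[m ->] | Dv].
  apply/ffunP => -[x y]; rewrite !ffunE /=.
  have [-> | ne_xy] := eqVneq x y.
    by case: (y == 1%g); case: (y == h); rewrite /=; ring.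
  have diag0 z : (x == z)%:R * (y == z)%:R = 0 :> k.
    rewrite -natrM mulnb; case: eqP => [xz | //]; case: eqP => [yz | //].
    by rewrite xz yz eqxx in ne_xy.
  transitivity (m * ((x == 1%g)%:R * (y == 1%g)%:R - (x == h)%:R * (y == h)%:R)).
    by rewrite !diag0 subrr mulr0.
  ring.
exists (v 1%g); apply/ffunP => z; rewrite !ffunE.
have coef x y : (if x == y then v x else 0) = (x == h)%:R * v y + v x * (y == 1%g)%:R.
  by move/ffunP/(_ (x, y)): Dv; rewrite !ffunE.
have [-> | ne_zh] := eqVneq z h.
  have [h1 | ne_h1] := eqVneq h 1%g.
    rewrite h1 in coef *; rewrite subrr mulr0.
    by move: (coef 1%g 1%g); rewrite !eqxx /= mul1r mulr1 -{1}[v 1%g]addr0 => /addrI.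
  move: (coef h 1%g); rewrite (negbTE ne_h1) !eqxx /= mul1r mulr1 => /esym/eqP.
  by rewrite addr_eq0 => /eqP ->; rewrite sub0r mulrN1 opprK.
have [z1 | ne_z1] := eqVneq z 1%g; first by rewrite z1 /= subr0 mulr1.
move: (coef h z); rewrite eq_sym (negbTE ne_zh) (negbTE ne_z1) eqxx /= mul1r mulr0 addr0.
by move=> <-; rewrite subrr mulr0.
Qed.

End GroupAlgebra.

Section RecursiveFamily.
Variables (k : comNzRingType) (gT : finGroupType) (theta p : nat) (g : 'I_theta -> gT).
Variables (beta : 'I_p -> {ffun 'I_theta -> nat}) (N : nat).
Variables (t : nvec p -> nvec p -> nvec p -> k) (mu : nvec p -> k).
Variables (u : nvec p -> galg k gT) (a : nvec p).
Hypothesis gT_abelian : abelian [set: gT].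
Hypothesis ht_beta_gt0 : forall l, (0 < ht (beta l))%N.
Hypothesis t_coass : t_coassoc beta t.

Local Notation h := (hpow g beta N).

Hypothesis u_rec : forall b : nvec p, nzv b -> (ht (under beta b) < ht (under beta a))%N ->
  u b = gscal (mu b) (gelem k 1%g - gelem k (h b))
        + dsum beta b (fun d e => gscal (t b d e * mu d) (u e)).
Hypothesis u_Delta : forall b : nvec p, nzv b -> (ht (under beta b) < ht (under beta a))%N ->
  gDelta (u b) = gtens (gelem k (h b)) (u b) + gtens (u b) (gelem k 1%g)
        + dsum beta b (fun d e => gscal2 (t b d e) (gtens (gmul (u d) (gelem k (h e))) (u e))).

Lemma u_recE (b : nvec p) z : nzv b -> (ht (under beta b) < ht (under beta a))%N ->
  u b z = mu b * ((z == 1%g)%:R - (z == h b)%:R)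
          + dsum beta b (fun d e => t b d e * mu d * u e z).
Proof.
move=> b_nz b_lt; rewrite {1}(u_rec b_nz b_lt) !ffunE dsum_ffunE.
by congr (_ + _); apply: eq_dsum => d e _; rewrite ffunE.
Qed.

Lemma u_DeltaE (c : nvec p) x y : nzv c -> (ht (under beta c) < ht (under beta a))%N ->
  u c x * (x == y)%:R
  = (x == h c)%:R * u c y + u c x * (y == 1%g)%:R
    + dsum beta c (fun d e => t c d e * (u d (x * (h e)^-1)%g * u e y)).
Proof.
move=> c_nz c_lt; rewrite mulr_natr mulrb.
move/ffunP/(_ (x, y)): (u_Delta c_nz c_lt); rewrite !ffunE dsum_ffunE /= => ->.
congr (_ + _).
by apply: eq_dsum => d e _; rewrite -gmul_gelemE !ffunE.
Qed.

Local Notation W z := (dsum beta a (fun b c => t a b c * mu b * u c z)).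
Local Notation S x y :=
  (dsum beta a (fun b c => t a b c * (u b (x * (h c)^-1)%g * u c y))).

Lemma Delta_rec_sumE x y :
  W x * (x == y)%:R = (x == h a)%:R * W y + W x * (y == 1%g)%:R + S x y.
Proof.
pose G b d e := mu b * (u d (x * (h e)^-1)%g * u e y).
have coass := dsum_coassoc ht_beta_gt0 a G t_coass.
(* add the vanishing difference of the two sides of [coass]; the identity then
   holds summand by summand *)
rewrite -[S x y]addr0 -(subrr (dsum beta a (fun b c =>
  dsum beta c (fun d e => t a b c * t c d e * G b d e)))) {2}coass.
rewrite -dsumB -(dsumMl beta a (x == h a)%:R) -!(dsumMr beta a) -!dsumD.
apply: eq_dsum => b c abc.
have [b_lt c_lt] := decomp_ltn ht_beta_gt0 abc.
have /and3P[b_nz c_nz bca] := abc.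
have hbc : (h b * h c)%g = h a := hpowM g N gT_abelian bca.
have shift z : (x * (h c)^-1 == z)%g = (x == z * h c)%g.
  by apply/eqP/eqP => [<- | ->]; rewrite ?mulgKV ?mulgK.
rewrite -mulrA (u_DeltaE _ _ c_nz c_lt) (u_recE _ b_nz b_lt) !shift mul1g hbc.
have -> : dsum beta c (fun d e => t a b c * t c d e * G b d e)
    = t a b c * mu b * dsum beta c (fun d e => t c d e * (u d (x * (h e)^-1)%g * u e y)).
  by rewrite -dsumMl; apply: eq_dsum => d e _; rewrite /G; ring.
have -> : dsum beta b (fun d e => t a b c * t b d e * G d e c)
    = t a b c * u c y * dsum beta b (fun d e => t b d e * mu d * u e (x * (h c)^-1)%g).
  by rewrite -dsumMl; apply: eq_dsum => d e _; rewrite /G; ring.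
ring.
Qed.

Lemma Delta_rec_sum :
  gDelta (dsum beta a (fun b c => gscal (t a b c * mu b) (u c)))
  = gtens (gelem k (h a)) (dsum beta a (fun b c => gscal (t a b c * mu b) (u c)))
    + gtens (dsum beta a (fun b c => gscal (t a b c * mu b) (u c))) (gelem k 1%g)
    + dsum beta a (fun b c => gscal2 (t a b c) (gtens (gmul (u b) (gelem k (h c))) (u c))).
Proof.
have WE z : dsum beta a (fun b c => gscal (t a b c * mu b) (u c)) z = W z.
  by rewrite dsum_ffunE; apply: eq_dsum => b c _; rewrite ffunE.
apply/ffunP => -[x y]; rewrite !ffunE /= !WE -[LHS]mulrb -[LHS]mulr_natr Delta_rec_sumE.
rewrite dsum_ffunE; congr (_ + _); apply: eq_dsum => b c _.
by rewrite -gmul_gelemE !ffunE.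
Qed.

End RecursiveFamily.

Theorem lemma2p9 (k : closedFieldType) (gT : finGroupType)
  (theta p : nat) (g : 'I_theta -> gT) (beta : 'I_p -> {ffun 'I_theta -> nat})
  (N : nat) (t : nvec p -> nvec p -> nvec p -> k)
  (n : nat) (mu : nvec p -> k) (u : nvec p -> galg k gT)
  (a : nvec p) (ua : galg k gT) :
  [pchar k] =i pred0 ->
  abelian [set: gT] ->
  (0 < N)%N ->
  (forall l, 0 < ht (beta l))%N ->
  t_coassoc beta t ->
  (1 <= n)%N ->
  (forall b : nvec p, nzv b -> (ht (under beta b) < n)%N ->
     u b = gscal (mu b) (gelem k 1%g - gelem k (hpow g beta N b))
           + dsum beta b (fun d e => gscal (t b d e * mu d) (u e))) ->
  (forall b : nvec p, nzv b -> (ht (under beta b) < n)%N ->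
     gDelta (u b) = gtens (gelem k (hpow g beta N b)) (u b) + gtens (u b) (gelem k 1%g)
           + dsum beta b (fun d e =>
               gscal2 (t b d e) (gtens (gmul (u d) (gelem k (hpow g beta N e))) (u e)))) ->
  ht (under beta a) = n ->
  (exists mua : k,
     ua = gscal mua (gelem k 1%g - gelem k (hpow g beta N a))
          + dsum beta a (fun b c => gscal (t a b c * mu b) (u c)))
  <->
  gDelta ua = gtens (gelem k (hpow g beta N a)) ua + gtens ua (gelem k 1%g)
              + dsum beta a (fun b c =>
                  gscal2 (t a b c) (gtens (gmul (u b) (gelem k (hpow g beta N c))) (u c))).
Proof.
move=> _ gT_abelian _ ht_beta_gt0 t_coass _ u_rec u_Delta ht_a; subst n.
have DeltaW := Delta_rec_sum gT_abelian ht_beta_gt0 t_coass u_rec u_Delta.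
set W := dsum beta a _ in DeltaW *; set S := dsum beta a _ in DeltaW *.
set ha := hpow g beta N a.
transitivity (exists m, ua - W = gscal m (gelem k 1%g - gelem k ha)).
  by split=> -[m E]; exists m; [rewrite E addrK | rewrite -E subrK].
rewrite skew_primitiveP gDeltaB gtensBl gtensBr DeltaW.
set hW := gtens _ W; set W1 := gtens W _; set hua := gtens _ ua; set ua1 := gtens ua _.
have -> : hua - hW + (ua1 - W1) = hua + ua1 + S - (hW + W1 + S).
  by rewrite [hW + W1 + S]addrC addrKA opprD addrACA.
by split=> [/addIr | ->].
Qed.
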